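(* Under the Markov-modulated setting, assume in addition that the chain is reversible, $\pi(x)P(x,y)=\pi(y)P(y,x)$ for all $x,y$. Let $1=\lambda_1\ge\lambda_2\ge\dots\ge\lambda_K>-1$ be the eigenvalues of $P$ ($K=|\mathcal{X}|$) with real eigenfunctions $f_1\equiv1,f_2,\dots,f_K$ forming an orthonormal basis with respect to $\langle f,g\rangle_\pi=\sum_{x}\pi(x)f(x)g(x)$, and let $\lambda_*=\max\{|\lambda_j|:2\le j\le K\}$. Define $$R=\sum_{z\in\mathcal{Z}:\,\sum_y\pi(y)r_y(z)>0}\frac{\sum_{y\in\mathcal{X}}\pi(y)r_y(z)^2}{\sum_{y\in\mathcal{X}}\pi(y)r_y(z)}.$$ Then $1\le R\le K$, and for every $x\in\mathcal{X}$, $n\ge0$, $L\ge0$, $$D_n(L)\le\frac12\Big(\sum_{j=2}^K\lambda_j^{2L}f_j(x)^2\Big)^{1/2}\sqrt2\,(R-1)^{1/2},$$ and consequently $$D_n(L)\le\frac12\lambda_*^L\Big(\frac1{\pi(x)}-1\Big)^{1/2}\sqrt2\,(R-1)^{1/2}.$$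
   Context: Markov-modulated setting: $(X_n)_{n\ge0}$ is a discrete-time, time-homogeneous Markov chain on a finite state space $\mathcal{X}$ with transition matrix $P$ ($P^L$ its $L$-th power), irreducible and aperiodic with stationary distribution $\pi$, started in stationarity ($X_0\sim\pi$). $(Z_n)_{n\ge0}$ take values in a countable set $\mathcal{Z}$ with $\Pr(Z_n=z\mid X_0,\dots,X_n,Z_0,\dots,Z_{n-1})=r_{X_n}(z)$ for a fixed family of pmfs $(r_y)_{y\in\mathcal{X}}$. $\|p-q\|_{TV}=\frac12\sum_z|p(z)-q(z)|$. Predictability given perfect observation $X_n=x$: $D_n(L)=\|\Pr(Z_{n+L}\in\cdot\mid X_n=x)-\Pr(Z_{n+L}\in\cdot)\|_{TV}$. *)

From HB Require Import structures.
From mathcomp Require Import all_boot all_order all_algebra.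
From mathcomp Require Import all_classical all_reals all_analysis.
Set Implicit Arguments. Unset Strict Implicit. Unset Printing Implicit Defensive.
Import Order.TTheory GRing.Theory Num.Theory.
Local Open Scope classical_set_scope.
Local Open Scope ring_scope.

(* State space: 'I_K (a finite set with K = |X| elements).
   Transition matrix P : 'M[R]_K, stationary distribution pi : 'I_K -> R. *)

Section Chain.
Variables (R : realType) (K : nat).

Definition stochastic (P : 'M[R]_K) : Prop :=
  (forall x y, 0 <= P x y) /\ (forall x, \sum_(y < K) P x y = 1).

Definition irreducible (P : 'M[R]_K) : Prop :=
  forall x y : 'I_K, exists m : nat, 0 < (P ^+ m) x y.

(* period of x is gcd {m >= 1 : P^m(x,x) > 0}; aperiodic: every period is 1,
   i.e. the only common divisor of all return times is 1. *)
Definition aperiodic (P : 'M[R]_K) : Prop :=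
  forall x : 'I_K, forall d : nat,
    (forall m : nat, (0 < m)%N -> 0 < (P ^+ m) x x -> (d %| m)%N) -> d = 1%N.

Definition stationary_distribution (P : 'M[R]_K) (pi : 'I_K -> R) : Prop :=
  (forall x, 0 <= pi x) /\ \sum_(x < K) pi x = 1 /\
  (forall y, \sum_(x < K) pi x * P x y = pi y).

Definition reversible (P : 'M[R]_K) (pi : 'I_K -> R) : Prop :=
  forall x y, pi x * P x y = pi y * P y x.

End Chain.

Section Process.
Variables (d : measure_display) (T : measurableType d) (R : realType).
Variables (K : nat) (Zt : countType).

Definition path_le (S : Type) (X : nat -> T -> S) (n : nat) (xs : nat -> S) : set T :=
  [set t | forall i, (i <= n)%N -> X i t = xs i].
Definition path_lt (S : Type) (X : nat -> T -> S) (n : nat) (zs : nat -> S) : set T :=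
  [set t | forall i, (i < n)%N -> X i t = zs i].

(* Markov-modulated setting:
   - (X_n) is a time-homogeneous Markov chain on 'I_K with transition matrix P
     and X_0 ~ pi (given through its finite-dimensional distributions);
   - Pr(Z_n = z | X_0..X_n, Z_0..Z_{n-1}) = r_{X_n}(z), written as
     Pr(B /\ Z_n = z) = r_{x_n}(z) Pr(B) for every cylinder event B. *)
Definition markov_modulated (Pr : probability T R) (P : 'M[R]_K) (pi : 'I_K -> R)
    (r : 'I_K -> Zt -> R) (X : nat -> T -> 'I_K) (Z : nat -> T -> Zt) : Prop :=
  (forall n x, measurable [set t | X n t = x]) /\
  (forall n z, measurable [set t | Z n t = z]) /\
  (forall y z, 0 <= r y z) /\
  (forall y, (\esum_(z in [set: Zt]) (r y z)%:E = 1)%E) /\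
      (forall n (xs : nat -> 'I_K),
          Pr (path_le X n xs) = (pi (xs 0%N) * \prod_(i < n) P (xs i) (xs i.+1))%:E) /\
      (forall n (xs : nat -> 'I_K) (zs : nat -> Zt) (z : Zt),
          Pr (path_le X n xs `&` path_lt Z n zs `&` [set t | Z n t = z]) =
          ((r (xs n) z)%:E * Pr (path_le X n xs `&` path_lt Z n zs))%E).

End Process.

Definition TV (R : realType) (Zt : countType) (p q : Zt -> R) : \bar R :=
  ((2^-1)%:E * \esum_(z in [set: Zt]) (`|p z - q z|)%:E)%E.

(* D_n(L) = || Pr(Z_{n+L} in . | X_n = x) - Pr(Z_{n+L} in .) ||_TV *)
Definition predictability d (T : measurableType d) (R : realType) (K : nat)
    (Zt : countType) (Pr : probability T R) (X : nat -> T -> 'I_K)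
    (Z : nat -> T -> Zt) (x : 'I_K) (n L : nat) : \bar R :=
  TV (fun z => fine (Pr ([set t | Z (n + L)%N t = z] `&` [set t | X n t = x]))
               / fine (Pr [set t | X n t = x]))
     (fun z => fine (Pr [set t | Z (n + L)%N t = z])).

Definition Rratio (R : realType) (K : nat) (Zt : countType)
    (pi : 'I_K -> R) (r : 'I_K -> Zt -> R) : \bar R :=
  (\esum_(z in [set z | (0 < \sum_(y < K) pi y * r y z)%R])
     ((\sum_(y < K) pi y * r y z ^+ 2) / (\sum_(y < K) pi y * r y z))%:E)%E.

(* lambda_* = max_{2 <= j <= K} |lambda_j|  (index 0 here is lambda_1) *)
Definition lambda_star (R : realType) (K : nat) (lam : 'I_K -> R) : R :=
  \big[Num.max/0]_(j < K | (0 < j)%N) `|lam j|.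

From Pilot Require Import Defs.
From HB Require Import structures.
From mathcomp Require Import all_boot all_order all_algebra.
From mathcomp Require Import all_classical all_reals all_analysis.
From mathcomp Require Import ring lra.
Import Order.TTheory GRing.Theory Num.Theory.
Local Open Scope classical_set_scope.
Local Open Scope ring_scope.
Set Implicit Arguments. Unset Strict Implicit.

(* By reversibility and the orthonormality of the eigenfunctions,
   [Pr(X_n = x, X_(n+L) = y) = pi(x) pi(y) sum_j lam_j^L f_j(x) f_j(y)], and the
   emission at time [n + L] only sees [X_(n+L)], so
   [Pr(Z_(n+L) = z | X_n = x) - Pr(Z_(n+L) = z) = sum_y pi(y) h(y) r_y(z)] with
   [h = sum_(j >= 2) lam_j^L f_j(x) f_j] of pi-mean zero. Centering [r_y(z)] at
   [q(z) = sum_y pi(y) r_y(z)] and applying AM-GM with weight [t q(z)] bounds this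
   by [(t q(z) |h|^2 + chi2(z) / t) / 2], where [sum_z chi2(z) = R - 1]; optimising
   in [t] gives [|h| sqrt (R - 1)], and completeness of the [f_j] gives
   [|h|^2 = sum_(j >= 2) lam_j^(2L) f_j(x)^2 <= lam_*^(2L) (1/pi(x) - 1)]. *)

Section Orthonormal.
Variables (R : realType) (K : nat) (pi : 'I_K -> R) (f : 'I_K -> 'I_K -> R).
Hypothesis orthonormal : forall i j, \sum_(x < K) pi x * f i x * f j x = (i == j)%:R.

(* The matrix [f j x] has the right inverse [pi x * f j x], hence also a left one. *)
Lemma orthonormal_completeness x y :
  pi x * \sum_(j < K) f j x * f j y = (x == y)%:R.
Proof.
pose F := \matrix_(j < K, x < K) f j x.
pose G := \matrix_(x < K, j < K) (pi x * f j x).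
have FG : F *m G = 1%:M.
  apply/matrixP => i j; rewrite !mxE -orthonormal; apply: eq_bigr => z _.
  by rewrite !mxE mulrCA mulrA.
have := congr1 (fun M : 'M[R]_K => M x y) (mulmx1C FG); rewrite !mxE => <-.
by rewrite mulr_sumr; apply: eq_bigr => j _; rewrite !mxE mulrA.
Qed.

Lemma orthonormal_weight_gt0 : (forall x, 0 <= pi x) -> forall x, 0 < pi x.
Proof.
move=> pi_ge0 x; rewrite lt_neqAle pi_ge0 andbT eq_sym; apply/eqP => pix0.
have := orthonormal_completeness x x.
by rewrite pix0 mul0r eqxx => /esym/eqP; rewrite oner_eq0.
Qed.

Lemma orthonormal_sum_sq x : 0 < pi x -> \sum_(j < K) f j x ^+ 2 = (pi x)^-1.
Proof.
move=> pix_gt0; apply: (mulfI (negbT (gt_eqF pix_gt0))).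
rewrite mulfV ?gt_eqF // (eq_bigr _ (fun j _ => expr2 (f j x))).
by rewrite orthonormal_completeness eqxx.
Qed.

Lemma orthonormal_norm2 (p : pred 'I_K) (a : 'I_K -> R) :
  \sum_(y < K) pi y * (\sum_(j < K | p j) a j * f j y) ^+ 2 = \sum_(j < K | p j) a j ^+ 2.
Proof.
transitivity (\sum_(y < K) \sum_(j < K | p j) \sum_(k < K | p k)
                a j * a k * (pi y * f j y * f k y)).
  apply: eq_bigr => y _; rewrite expr2 mulr_suml mulr_sumr; apply: eq_bigr => j _.
  rewrite !mulr_sumr; apply: eq_bigr => k _; ring.
rewrite exchange_big /=; apply: eq_bigr => j pj; rewrite exchange_big /=.
rewrite (eq_bigr (fun k => a j * a k * (j == k)%:R)); last first.
  by move=> k _; rewrite -mulr_sumr orthonormal.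
rewrite (bigD1 j) //= eqxx mulr1 big1 ?addr0 ?expr2 // => k /andP [_ /negPf].
by rewrite eq_sym => ->; rewrite mulr0.
Qed.

End Orthonormal.

Section Forward.
Variables (R : realType) (K : nat) (P : 'M[R]_K) (pi : 'I_K -> R).

(* A constraint [c] pins [X_i] to [w] when [c i = Some w] and leaves it free when
   [c i = None]; [forward c m y] is then the probability that the chain started
   from [pi] satisfies the pins up to time [m] and ends in [X_m = y]. *)
Definition pinned (c : nat -> option 'I_K) (i : nat) (y : 'I_K) : R :=
  if c i is Some w then (y == w)%:R else 1.

Fixpoint forward (c : nat -> option 'I_K) (m : nat) : 'I_K -> R := fun y =>
  match m with
  | 0 => pinned c 0 y * pi y
  | m'.+1 => pinned c m'.+1 y * \sum_(w < K) forward c m' w * P w y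
  end.

Definition pin (c : nat -> option 'I_K) (k : nat) (w : 'I_K) : nat -> option 'I_K :=
  fun i => if i == k then Some w else c i.

Lemma eq_forward c c' m : (forall i, (i <= m)%N -> c i = c' i) ->
  forall y, forward c m y = forward c' m y.
Proof.
elim: m => [|m IH] cc' y /=; first by rewrite /pinned cc'.
rewrite /pinned cc' //; congr (_ * _); apply: eq_bigr => w _.
by rewrite IH // => i im; apply: cc'; rewrite (leq_trans im).
Qed.

Lemma forward_path (xs : nat -> 'I_K) m y :
  forward (fun i => Some (xs i)) m y =
  (y == xs m)%:R * (pi (xs 0%N) * \prod_(i < m) P (xs i) (xs i.+1)).
Proof.
elim: m y => [|m IH] y /=.
  by rewrite /pinned big_ord0 mulr1; case: eqP => [->|_]; rewrite ?mul0r.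
rewrite /pinned; under eq_bigr do rewrite IH.
rewrite (bigD1 (xs m)) //= eqxx [X in _ + X]big1 ?addr0; last first.
  by move=> w /negPf ->; rewrite !mul0r.
rewrite big_ord_recr /= mul1r; case: eqP => [->|]; last by rewrite !mul0r.
by rewrite !mul1r mulrA.
Qed.

Lemma sum_forward_pin c k m y : c k = None -> (k <= m)%N ->
  \sum_(w < K) forward (pin c k w) m y = forward c m y.
Proof.
move=> ck; elim: m y => [|m IH] y.
  rewrite leqn0 => /eqP k0; subst k => /=.
  rewrite /pinned /pin /= ck mul1r.
  rewrite (bigD1 y) //= eqxx mul1r [X in _ + X]big1 ?addr0 // => w /negPf.
  by rewrite eq_sym => ->; rewrite mul0r.
rewrite leq_eqVlt => /orP [/eqP km|km].
  subst k => /=.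
  have free_before w : \sum_(u < K) forward (pin c m.+1 w) m u * P u y =
                       \sum_(u < K) forward c m u * P u y.
    apply: eq_bigr => u _; congr (_ * _); apply: eq_forward => i im.
    by rewrite /pin; case: eqP => // ik; move: im; rewrite ik ltnn.
  under eq_bigr do rewrite free_before.
  rewrite -big_distrl /=; congr (_ * _).
  rewrite /pinned /pin eqxx ck.
  rewrite (bigD1 y) //= eqxx [X in _ + X]big1 ?addr0 // => w /negPf.
  by rewrite eq_sym => ->.
have pinned_last w : pinned (pin c k w) m.+1 y = pinned c m.+1 y.
  by rewrite /pinned /pin; case: eqP => // mk; move: km; rewrite mk ltnn.
rewrite /=; under eq_bigr do rewrite pinned_last.
rewrite -mulr_sumr; congr (_ * _).
rewrite exchange_big /=; apply: eq_bigr => u _.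
by rewrite -big_distrl /= IH.
Qed.

Hypothesis pi_stationary : forall y, \sum_(x < K) pi x * P x y = pi y.

Lemma forward_free m y : forward (fun _ => None) m y = pi y.
Proof.
elim: m y => [|m IH] y /=; first by rewrite /pinned mul1r.
by rewrite /pinned mul1r; under eq_bigr do rewrite IH; rewrite pi_stationary.
Qed.

Definition pin_at (n : nat) (x : 'I_K) := pin (fun _ => None) n x.

Lemma forward_pin_at_lt n x m y : (m < n)%N -> forward (pin_at n x) m y = pi y.
Proof.
move=> mn; rewrite -(forward_free m y); apply: eq_forward => i im.
by rewrite /pin_at /pin; case: eqP => // ni; move: mn; rewrite -ni ltnNge im.
Qed.

Lemma forward_pin_at n x y : forward (pin_at n x) n y = (y == x)%:R * pi y.
Proof.
case: n => [|n] /=; first by rewrite /pinned /pin_at /pin.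
rewrite /pinned /pin_at /pin eqxx; congr (_ * _).
under eq_bigr do rewrite (@forward_pin_at_lt n.+1 x n) //.
by rewrite pi_stationary.
Qed.

Variables (lam : 'I_K -> R) (f : 'I_K -> 'I_K -> R).
Hypothesis completeness : forall x y, pi x * \sum_(j < K) f j x * f j y = (x == y)%:R.
Hypothesis reversible : forall x y, pi x * P x y = pi y * P y x.
Hypothesis eigen : forall j x, \sum_(y < K) P x y * f j y = lam j * f j x.

(* The left-hand side is [pi x * P^L x y]; reversibility moves [P] onto the
   eigenfunctions. *)
Lemma forward_pin_at_spectral n x L y :
  forward (pin_at n x) (n + L) y =
  pi x * pi y * \sum_(j < K) lam j ^+ L * f j x * f j y.
Proof.
elim: L y => [|L IH] y.
  rewrite addn0 forward_pin_at.
  rewrite (eq_bigr (fun j => f j x * f j y)); last by move=> j _; rewrite expr0 mul1r.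
  by rewrite mulrAC completeness eq_sym; ring.
rewrite addnS /= {1}/pinned /pin_at /pin.
have -> : ((n + L).+1 == n) = false.
  by apply/negbTE; rewrite neq_ltn ltnS leq_addr orbT.
rewrite mul1r.
transitivity (\sum_(j < K) (pi x * (lam j ^+ L * f j x)) *
                 \sum_(w < K) pi w * P w y * f j w).
  under eq_bigr do rewrite IH mulr_sumr big_distrl /=.
  rewrite exchange_big /=; apply: eq_bigr => j _.
  by rewrite mulr_sumr; apply: eq_bigr => w _; ring.
rewrite mulr_sumr; apply: eq_bigr => j _.
under eq_bigr do rewrite reversible -mulrA.
by rewrite -mulr_sumr eigen exprS; ring.
Qed.

End Forward.

Lemma measure_bigcup_scale d (T : measurableType d) (R : realType) (J : countType)
    (mu : {measure set T -> \bar R}) (E F : J -> set T) (c : R) :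
  (forall i, measurable (E i)) -> (forall i, measurable (F i)) ->
  trivIset setT E -> trivIset setT F -> 0 <= c ->
  (forall i, mu (E i) = (c%:E * mu (F i))%E) ->
  mu (\bigcup_i E i) = (c%:E * mu (\bigcup_i F i))%E.
Proof.
move=> mE mF tE tF c0 EF.
pose seq_of (G : J -> set T) (n : nat) := if pickle_inv n is Some i then G i else set0.
have bigcup_seq_of G : \bigcup_i G i = \bigcup_n seq_of G n.
  apply/seteqP; split => t [i _ Git].
    by exists (pickle i) => //; rewrite /seq_of pickleK_inv.
  by move: Git; rewrite /seq_of; case: pickle_inv => // i' Gi't; exists i'.
have seq_of_measurable G : (forall i, measurable (G i)) -> forall n, measurable (seq_of G n).
  by move=> mG n; rewrite /seq_of; case: pickle_inv.
have seq_of_trivIset G : trivIset setT G -> trivIset setT (seq_of G).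
  move=> tG m n _ _; rewrite /seq_of.
  case Hm: (pickle_inv m) => [i|]; last by rewrite set0I => -[].
  case Hn: (pickle_inv n) => [j|]; last by rewrite setI0 => -[].
  move=> /(tG _ _ I I) ij; subst j.
  by rewrite -(@pickle_invK J m) -(@pickle_invK J n) Hm Hn.
rewrite !bigcup_seq_of !measure_bigcup //=;
  try by [apply: seq_of_measurable | apply: seq_of_trivIset].
- rewrite -nneseriesZl; last by move=> n _; exact: measure_ge0.
  apply: eq_eseriesr => n _; rewrite /seq_of; case: pickle_inv => [i|]; first exact: EF.
  by rewrite measure0 mule0.
- by move=> n _; apply: seq_of_measurable.
- by move=> n _; apply: seq_of_measurable.
Qed.

Section Cylinders.
Variables (d : measure_display) (T : measurableType d) (R : realType).
Variables (K : nat) (Zt : countType) (Pr : probability T R).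
Variables (P : 'M[R]_K) (pi : 'I_K -> R) (r : 'I_K -> Zt -> R).
Variables (X : nat -> T -> 'I_K) (Z : nat -> T -> Zt).
Hypothesis modulated : markov_modulated Pr P pi r X Z.

Let X_measurable : forall n x, measurable [set t | X n t = x].
Proof. by case: modulated. Qed.

Let Z_measurable : forall n z, measurable [set t | Z n t = z].
Proof. by case: modulated => _ []. Qed.

Let r_ge0 : forall y z, 0 <= r y z.
Proof. by case: modulated => _ [_ []]. Qed.

Let prob_path : forall n xs,
  Pr (Defs.path_le X n xs) = (pi (xs 0%N) * \prod_(i < n) P (xs i) (xs i.+1))%:E.
Proof. by case: modulated => _ [_ [_ [_ []]]]. Qed.

Let prob_path_emission_hist : forall n xs zs z,
  Pr (Defs.path_le X n xs `&` Defs.path_lt Z n zs `&` [set t | Z n t = z]) =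
  ((r (xs n) z)%:E * Pr (Defs.path_le X n xs `&` Defs.path_lt Z n zs))%E.
Proof. by case: modulated => _ [_ [_ [_ []]]]. Qed.

Lemma path_le_measurable n xs : measurable (Defs.path_le X n xs).
Proof.
have -> : Defs.path_le X n xs = \bigcap_(i in [set i | (i <= n)%N]) [set t | X i t = xs i].
  by [].
by apply: bigcap_measurableType => i _; apply: X_measurable.
Qed.

Lemma path_lt_measurable n zs : measurable (Defs.path_lt Z n zs).
Proof.
have -> : Defs.path_lt Z n zs = \bigcap_(i in [set i | (i < n)%N]) [set t | Z i t = zs i].
  by [].
by apply: bigcap_measurableType => i _; apply: Z_measurable.
Qed.

Lemma prob_path_emission N xs z :
  Pr (Defs.path_le X N xs `&` [set t | Z N t = z]) =
  ((r (xs N) z)%:E * Pr (Defs.path_le X N xs))%E.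
Proof.
pose A := Defs.path_le X N xs.
pose set_at (zs : nat -> Zt) k w := fun i => if i == k then w else zs i.
suff free_emissions j : (j <= N)%N -> forall zs,
    Pr (A `&` Defs.path_lt Z (N - j) zs `&` [set t | Z N t = z]) =
    ((r (xs N) z)%:E * Pr (A `&` Defs.path_lt Z (N - j) zs))%E.
  have := free_emissions N (leqnn N) (fun _ => z); rewrite subnn.
  have -> : Defs.path_lt Z 0 (fun _ => z) = setT by apply/seteqP; split.
  by rewrite setIT.
elim: j => [|j IH] jN zs; first by rewrite subn0 prob_path_emission_hist.
set k := (N - j.+1)%N.
have Ek : (N - j)%N = k.+1 by rewrite /k subnSK.
have free_k : A `&` Defs.path_lt Z k zs =
              \bigcup_w (A `&` Defs.path_lt Z k.+1 (set_at zs k w)).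
  apply/seteqP; split => t.
    move=> [At Zt']; exists (Z k t) => //; split => // i; rewrite ltnS leq_eqVlt.
    rewrite /set_at; case: eqP => [->|_ /= ik] //; exact: Zt'.
  move=> [w _ [At Zt']]; split => // i ik; have := Zt' i (ltnW ik).
  by rewrite /set_at (ltn_eqF ik).
have disjoint_k : trivIset setT (fun w => A `&` Defs.path_lt Z k.+1 (set_at zs k w)).
  move=> w1 w2 _ _ [t [[_ h1] [_ h2]]].
  by have := h1 k (ltnSn k); have := h2 k (ltnSn k); rewrite /set_at eqxx => -> ->.
rewrite free_k setI_bigcupl; apply: measure_bigcup_scale => //.
- by move=> w; apply: measurableI; [apply: measurableI|];
    [apply: path_le_measurable|apply: path_lt_measurable|apply: Z_measurable].
- by move=> w; apply: measurableI; [apply: path_le_measurable|apply: path_lt_measurable].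
- by move=> w1 w2 _ _ [t [[h1 _] [h2 _]]]; apply: disjoint_k => //; exists t.
- by move=> w; rewrite /A -Ek; apply: IH; apply: ltnW.
Qed.

Definition pinned_event N (c : nat -> option 'I_K) :=
  [set t | forall i, (i <= N)%N -> forall w, c i = Some w -> X i t = w].

Lemma pinned_event_measurable N c : measurable (pinned_event N c).
Proof.
have -> : pinned_event N c = \bigcap_(i in [set i | (i <= N)%N])
                               [set t | forall w, c i = Some w -> X i t = w] by [].
apply: bigcap_measurableType => i _.
case: (c i) => [w|].
  have -> : [set t | forall w0, Some w = Some w0 -> X i t = w0] = [set t | X i t = w].
    by apply/seteqP; split => t /=; [apply|move=> -> w0 [->]].
  exact: X_measurable.
have -> : [set t | forall w0, None = Some w0 -> X i t = w0] = setT by apply/seteqP; split.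
exact: measurableT.
Qed.

Lemma prob_partition_X S k : measurable S ->
  Pr S = (\sum_(w < K) Pr (S `&` [set t | X k t = w]))%E.
Proof.
move=> mS; rewrite -measure_bigsetU_ord //.
- congr (Pr _); rewrite -bigcup_seq; apply/seteqP; split => t.
    by move=> St; exists (X k t) => //=; rewrite mem_index_enum.
  by move=> [w _ []].
- by move=> w; apply: measurableI.
- by move=> w1 w2 _ _ [t [[_ h1] [_ h2]]]; rewrite -h1 -h2.
Qed.

(* Induction on the free coordinates: a free [X_k] is split over its values,
   which on the [forward] side is [sum_forward_pin]. *)
Lemma prob_pinned_event N B (g : 'I_K -> R) : measurable B ->
  (forall xs, Pr (Defs.path_le X N xs `&` B) = ((g (xs N))%:E * Pr (Defs.path_le X N xs))%E) ->
  forall c, Pr (pinned_event N c `&` B) = (\sum_(y < K) forward P pi c N y * g y)%:E.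
Proof.
move=> mB prob_B.
suff free_from k c : (forall i, (k <= i <= N)%N -> c i != None) ->
    Pr (pinned_event N c `&` B) = (\sum_(y < K) forward P pi c N y * g y)%:E.
  move=> c; apply: (free_from N.+1) => i /andP [Ni iN].
  by move: (leq_trans Ni iN); rewrite ltnn.
elim: k c => [|k IH] c c_pinned.
  have : c 0%N != None by apply: c_pinned.
  case E0 : (c 0%N) => [w0|] // _.
  pose xs i := odflt w0 (c i).
  have c_xs i : (i <= N)%N -> c i = Some (xs i).
    by move=> iN; have := c_pinned i iN; rewrite /xs; case: (c i).
  have -> : pinned_event N c = Defs.path_le X N xs.
    apply/seteqP; split => t Ht i iN; first by apply: (Ht i iN); apply: c_xs.
    by move=> w; rewrite c_xs // => -[<-]; apply: Ht.
  rewrite prob_B prob_path -EFinM; congr (_%:E).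
  rewrite (eq_bigr (fun y => forward P pi (fun i => Some (xs i)) N y * g y)); last first.
    by move=> y _; congr (_ * _); apply: eq_forward => i /c_xs.
  under eq_bigr do rewrite forward_path.
  rewrite (bigD1 (xs N)) //= eqxx [X in _ + X]big1 ?addr0; last first.
    by move=> y /negPf ->; rewrite !mul0r.
  by rewrite mul1r mulrC.
have [kN|Nk] := leqP k N; last first.
  apply: IH => i /andP [ki iN]; exfalso; have := leq_trans ki iN.
  by rewrite leqNgt Nk.
case ck: (c k) => [wk|].
  apply: IH => i /andP [ki iN]; move: ki; rewrite leq_eqVlt => /orP [/eqP <-|ki].
    by rewrite ck.
  by apply: c_pinned; rewrite ki.
rewrite (@prob_partition_X _ k); last by apply: measurableI; [apply: pinned_event_measurable|].
have pin_k w :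
    pinned_event N c `&` B `&` [set t | X k t = w] = pinned_event N (pin c k w) `&` B.
  apply/seteqP; split => t.
    move=> [[Ht Bt] Xt]; split => // i iN w'; rewrite /pin; case: eqP => [-> [<-]//|_].
    exact: Ht.
  move=> [Ht Bt]; split; last by apply: (Ht k kN); rewrite /pin eqxx.
  split => // i iN w' ci; apply: (Ht i iN); rewrite /pin; case: eqP => // ik.
  by move: ci; rewrite ik ck.
have IH_pin w : Pr (pinned_event N (pin c k w) `&` B) =
     (\sum_(y < K) forward P pi (pin c k w) N y * g y)%:E.
  apply: IH => i /andP [ki iN]; rewrite /pin; case: (eqVneq i k) => [_|ik] //.
  have k_lt_i : (k < i)%N by rewrite ltn_neqAle eq_sym ik ki.
  by apply: c_pinned; rewrite k_lt_i iN.
under eq_bigr do rewrite pin_k IH_pin.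
rewrite sumEFin; congr (_%:E).
rewrite exchange_big /=; apply: eq_bigr => y _.
by rewrite -big_distrl /= sum_forward_pin.
Qed.

Hypothesis pi_stationary : forall y, \sum_(x < K) pi x * P x y = pi y.

Lemma prob_X n x : Pr [set t | X n t = x] = (pi x)%:E.
Proof.
have -> : [set t | X n t = x] = pinned_event n (pin_at n x) `&` setT.
  rewrite setIT; apply/seteqP; split => t.
    by move=> <- i iN w; rewrite /pin_at /pin; case: eqP => [-> [<-]|].
  by apply; rewrite // /pin_at /pin eqxx.
rewrite (@prob_pinned_event n setT (fun _ => 1)) //; last by move=> xs; rewrite setIT mul1e.
congr (_%:E); under eq_bigr do rewrite mulr1 forward_pin_at //.
rewrite (bigD1 x) //= eqxx mul1r [X in _ + X]big1 ?addr0 //.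
by move=> y /negPf ->; rewrite mul0r.
Qed.

Lemma prob_Z N z : Pr [set t | Z N t = z] = (\sum_(y < K) pi y * r y z)%:E.
Proof.
have -> : [set t | Z N t = z] = pinned_event N (fun _ => None) `&` [set t | Z N t = z].
  by apply/seteqP; split => t // [].
rewrite (@prob_pinned_event N _ (fun y => r y z)) //; last first.
  by move=> xs; rewrite prob_path_emission.
by congr (_%:E); under eq_bigr do rewrite forward_free //.
Qed.

Variables (lam : 'I_K -> R) (f : 'I_K -> 'I_K -> R).
Hypothesis completeness : forall x y, pi x * \sum_(j < K) f j x * f j y = (x == y)%:R.
Hypothesis reversible : forall x y, pi x * P x y = pi y * P y x.
Hypothesis eigen : forall j x, \sum_(y < K) P x y * f j y = lam j * f j x.

Lemma prob_ZX n L x z :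
  Pr ([set t | Z (n + L)%N t = z] `&` [set t | X n t = x]) =
  (\sum_(y < K) pi x * pi y * (\sum_(j < K) lam j ^+ L * f j x * f j y) * r y z)%:E.
Proof.
have -> : [set t | Z (n + L)%N t = z] `&` [set t | X n t = x] =
          pinned_event (n + L) (pin_at n x) `&` [set t | Z (n + L)%N t = z].
  rewrite setIC; apply/seteqP; split => t [Ht Zt']; split => //.
    by move=> i iN w; rewrite /pin_at /pin; case: eqP => [-> [<-]|].
  by apply: (Ht n (leq_addr _ _)); rewrite /pin_at /pin eqxx.
rewrite (@prob_pinned_event (n + L) _ (fun y => r y z)) //; last first.
  by move=> xs; rewrite prob_path_emission.
congr (_%:E); apply: eq_bigr => y _.
by rewrite (forward_pin_at_spectral pi_stationary completeness reversible eigen).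
Qed.

End Cylinders.

Lemma two_norm_mul_le (R : realType) (s a b : R) : 0 < s ->
  2 * (`|a| * `|b|) <= s * a ^+ 2 + b ^+ 2 / s.
Proof.
move=> sp.
rewrite -(real_normK (num_real a)) -(real_normK (num_real b)).
move: `|a| `|b| => u v.
have h : 0 <= (s * u - v) ^+ 2 / s by apply: divr_ge0; [apply: sqr_ge0|apply: ltW].
have e : (s * u - v) ^+ 2 / s = s * u ^+ 2 + v ^+ 2 / s - 2 * (u * v).
  by field; rewrite gt_eqF.
by rewrite -subr_ge0 -e.
Qed.

(* If [H = 0] (resp. [E = 0]) a large (resp. small) [t] forces [V <= 0];
   otherwise take [t = sqrt E / sqrt H]. *)
Lemma le_sqrt_mul_of_amgm (R : realType) (V H E : R) : 0 <= H -> 0 <= E ->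
  (forall t, 0 < t -> V <= (t * H + E / t) / 2) -> V <= Num.sqrt H * Num.sqrt E.
Proof.
move=> H0 E0 amgm.
have sH := sqr_sqrtr H0; have sE := sqr_sqrtr E0.
have [Hp|] := ltP 0 H; last first.
  move=> HH; have H00 : H = 0 by apply/eqP; rewrite eq_le HH H0.
  rewrite H00 sqrtr0 mul0r; rewrite leNgt; apply/negP => Vp.
  have tp : 0 < (E + 1) / V by apply: divr_gt0 => //; lra.
  have := amgm _ tp; rewrite H00 mulr0 add0r.
  have -> : E / ((E + 1) / V) = E * V / (E + 1) by field; rewrite !gt_eqF //; lra.
  move=> h; have : E * V / (E + 1) < 2 * V.
    rewrite ltr_pdivrMr; last lra.
    nra.
  lra.
have [Ep|] := ltP 0 E; last first.
  move=> EE; have E00 : E = 0 by apply/eqP; rewrite eq_le EE E0.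
  rewrite E00 sqrtr0 mulr0; rewrite leNgt; apply/negP => Vp.
  have tp : 0 < V / (H + 1) by apply: divr_gt0 => //; lra.
  have := amgm _ tp; rewrite E00 mul0r addr0.
  move=> h; have : V / (H + 1) * H < 2 * V.
    rewrite mulrAC ltr_pdivrMr; last lra.
    nra.
  lra.
have sHp : 0 < Num.sqrt H by rewrite sqrtr_gt0.
have sEp : 0 < Num.sqrt E by rewrite sqrtr_gt0.
have tp : 0 < Num.sqrt E / Num.sqrt H by apply: divr_gt0.
have := amgm _ tp.
move: (Num.sqrt H) (Num.sqrt E) sH sE sHp sEp tp => a b <- <- ap bp _.
have -> : (b / a * a ^+ 2 + b ^+ 2 / (b / a)) / 2 = a * b by field; rewrite !gt_eqF.
by [].
Qed.

Lemma esumZl_le (R : realType) (T : choiceType) (S : set T) (a : T -> \bar R) (c : R) :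
  0 <= c -> (forall i, (0 <= a i)%E) ->
  (\esum_(i in S) (c%:E * a i) <= c%:E * \esum_(i in S) a i)%E.
Proof.
move=> c0 a0; apply: ge_ereal_sup => _ [X [finX XS] <-] /=.
rewrite fsbig_finite //= -ge0_sume_distrr; last by move=> i _; apply: a0.
rewrite lee_wpmul2l ?lee_fin // -fsbig_finite //.
by apply: ereal_sup_ubound; exists X.
Qed.

Lemma ge0_esumZl (R : realType) (T : choiceType) (S : set T) (a : T -> \bar R) (c : R) :
  0 <= c -> (forall i, (0 <= a i)%E) ->
  (\esum_(i in S) (c%:E * a i) = c%:E * \esum_(i in S) a i)%E.
Proof.
move=> c0 a0; apply/eqP; rewrite eq_le esumZl_le //=.
have [->|cpos] := eqVneq c 0.
  by rewrite mul0e; apply: esum_ge0 => i _; rewrite mul0e.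
have c0' : 0 < c by rewrite lt_neqAle eq_sym cpos c0.
have ci : 0 <= c^-1 by rewrite invr_ge0.
have := @esumZl_le R T S (fun i => c%:E * a i)%E c^-1 ci.
rewrite (eq_esum (b := a)); last first.
  by move=> i _; rewrite muleA -EFinM mulVf ?mul1e // gt_eqF.
have c0E : (0 <= c%:E)%E by rewrite lee_fin.
move=> H; have := H (fun i => mule_ge0 c0E (a0 i)).
move/(lee_wpmul2l c0E).
by rewrite muleA -EFinM divff ?mul1e // gt_eqF.
Qed.

Section Emission.
Variables (R : realType) (K : nat) (Zt : countType).
Variables (pi : 'I_K -> R) (r : 'I_K -> Zt -> R).
Hypothesis pi_gt0 : forall y, 0 < pi y.
Hypothesis pi_sum : \sum_(y < K) pi y = 1.
Hypothesis r_ge0 : forall y z, 0 <= r y z.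
Hypothesis r_sum : forall y, (\esum_(z in [set: Zt]) (r y z)%:E = 1)%E.

Definition emission z := \sum_(y < K) pi y * r y z.
Definition emission_sq z := \sum_(y < K) pi y * r y z ^+ 2.
Definition emission_chi2 z :=
  if 0 < emission z then emission_sq z / emission z - emission z else 0.

Lemma emission_ge0 z : 0 <= emission z.
Proof. by apply: sumr_ge0 => y _; apply: mulr_ge0; [apply: ltW|]. Qed.

Lemma emission_eq0 z : ~~ (0 < emission z) -> emission z = 0.
Proof. by move=> qz; apply/eqP; rewrite eq_le emission_ge0 andbT leNgt. Qed.

Lemma r_eq0_of_emission z : ~~ (0 < emission z) -> forall y, r y z = 0.
Proof.
move=> /emission_eq0 qz0 y.
have pir_ge0 (i : 'I_K) : predT i -> 0 <= pi i * r i z.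
  by move=> _; apply: mulr_ge0; [apply: ltW|].
have /eqP := @psumr_eq0P _ _ _ _ pir_ge0 qz0 y isT.
by rewrite mulf_eq0 (gt_eqF (pi_gt0 y)) => /eqP.
Qed.

Lemma esum_emission : (\esum_(z in [set: Zt]) (emission z)%:E = 1)%E.
Proof.
rewrite (eq_esum (b := fun z => \sum_(y < K) (pi y * r y z)%:E)); last first.
  by move=> z _; rewrite sumEFin.
rewrite esum_sum; last by move=> z y _ _; rewrite lee_fin mulr_ge0 // ltW.
rewrite (eq_bigr (fun y => (pi y)%:E)) ?sumEFin ?pi_sum // => y _.
rewrite (eq_esum (b := fun z => ((pi y)%:E * (r y z)%:E)%E)) //.
rewrite ge0_esumZl; [by rewrite r_sum mule1 | exact: ltW | by move=> z; rewrite lee_fin].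
Qed.

Lemma emission_variance z :
  \sum_(y < K) pi y * (r y z - emission z) ^+ 2 = emission_sq z - emission z ^+ 2.
Proof.
transitivity (\sum_(y < K) pi y * r y z ^+ 2 - 2 * emission z * \sum_(y < K) pi y * r y z
              + emission z ^+ 2 * \sum_(y < K) pi y).
  move: (emission z) => q; rewrite !mulr_sumr -sumrB -big_split /=.
  by apply: eq_bigr => y _; ring.
by rewrite pi_sum -/(emission z) /emission_sq; ring.
Qed.

Lemma emission_sq_ge z : emission z ^+ 2 <= emission_sq z.
Proof.
rewrite -subr_ge0 -emission_variance; apply: sumr_ge0 => y _.
by apply: mulr_ge0; [apply: ltW|apply: sqr_ge0].
Qed.

Lemma emission_chi2_ge0 z : 0 <= emission_chi2 z.
Proof.
rewrite /emission_chi2; case: ifPn => // qz.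
by rewrite subr_ge0 ler_pdivlMr // -expr2 emission_sq_ge.
Qed.

Lemma Rratio_chi2 : Rratio pi r = (\esum_(z in [set: Zt]) (emission_chi2 z)%:E + 1)%E.
Proof.
rewrite /Rratio -/emission.
rewrite (eq_esum (b := fun z =>
    ((emission_sq z / emission z - emission z)%:E + (emission z)%:E)%E)); last first.
  by move=> z _; rewrite -EFinD subrK.
rewrite esumD; first last.
- by move=> z _; rewrite lee_fin emission_ge0.
- by move=> z /= qz; rewrite lee_fin subr_ge0 ler_pdivlMr // -expr2 emission_sq_ge.
have inE z : (z \in [set z0 | 0 < \sum_(y < K) pi y * r y z0]) = (0 < emission z).
  by apply/idP/idP => [/set_mem|/mem_set].
congr (_ + _)%E.
  by rewrite esum_mkcond; apply: eq_esum => z _; rewrite /emission_chi2 inE; case: ifPn.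
rewrite -esum_emission esum_mkcond; apply: eq_esum => z _.
by rewrite inE; case: ifPn => //= /emission_eq0 ->.
Qed.

Lemma Rratio_ge1 : (1 <= Rratio pi r)%E.
Proof.
by rewrite Rratio_chi2 leeDr // esum_ge0 // => z _; rewrite lee_fin emission_chi2_ge0.
Qed.

(* Each summand of [Rratio] is at most [sum_y r y z], since [pi y * r y z <= emission z]. *)
Lemma Rratio_leK : (Rratio pi r <= K%:R%:E)%E.
Proof.
rewrite /Rratio; set S := [set z | _].
apply: (@le_trans _ _ (\esum_(z in S) (\sum_(y < K) r y z)%:E)).
  apply: le_esum => z /= qz; rewrite lee_fin -/(emission z) in qz *.
  rewrite ler_pdivrMr // /emission /emission_sq mulr_sumr; apply: ler_sum => y _.
  rewrite expr2 mulrA [X in _ <= X]mulrC ler_wpM2l //.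
    by apply: mulr_ge0 => //; apply: ltW.
  by rewrite (bigD1 y) //= lerDl; apply: sumr_ge0 => *; exact: r_ge0.
apply: (@le_trans _ _ (\esum_(z in [set: Zt]) (\sum_(y < K) r y z)%:E)).
  rewrite [X in (X <= _)%E]esum_mkcond; apply: le_esum => z _.
  by case: ifPn => // _; rewrite lee_fin; apply: sumr_ge0 => *; exact: r_ge0.
rewrite (eq_esum (b := fun z => \sum_(y < K) (r y z)%:E)); last by move=> z _; rewrite sumEFin.
rewrite esum_sum; last by move=> z y _ _; rewrite lee_fin.
by under eq_bigr do rewrite r_sum; rewrite sumEFin sumr_const card_ord.
Qed.

Lemma Rratio_fineK : Rratio pi r = (fine (Rratio pi r))%:E.
Proof.
rewrite fineK // ge0_fin_numE; last by apply: (le_trans _ Rratio_ge1).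
by apply: (le_lt_trans Rratio_leK); rewrite ltey.
Qed.

Lemma fine_Rratio_ge1 : 1 <= fine (Rratio pi r).
Proof. by rewrite -lee_fin -Rratio_fineK Rratio_ge1. Qed.

Lemma esum_emission_chi2 :
  (\esum_(z in [set: Zt]) (emission_chi2 z)%:E)%E = (fine (Rratio pi r) - 1)%:E.
Proof.
have := Rratio_chi2; rewrite Rratio_fineK => /(congr1 (fun x => x - 1)%E).
by rewrite addeK // EFinB => <-.
Qed.

Section MeanZero.
Variable h : 'I_K -> R.
Hypothesis h_mean0 : \sum_(y < K) pi y * h y = 0.

(* As [h] has mean zero, [r y z] may be centred at [emission z]; then AM-GM
   with weight [t * emission z]. *)
Lemma emission_cov_le t z : 0 < t ->
  `|\sum_(y < K) pi y * h y * r y z| <=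
    (t * (\sum_(y < K) pi y * h y ^+ 2) * emission z + emission_chi2 z / t) / 2.
Proof.
move=> t_gt0; rewrite /emission_chi2; case: ifPn => qz; last first.
  rewrite big1 => [|y _]; last by rewrite r_eq0_of_emission // mulr0.
  by rewrite emission_eq0 // normr0 mulr0 mul0r addr0 mul0r.
have -> : \sum_(y < K) pi y * h y * r y z =
          \sum_(y < K) pi y * h y * (r y z - emission z).
  transitivity (\sum_(y < K) pi y * h y * r y z - emission z * \sum_(y < K) pi y * h y).
    by rewrite h_mean0 mulr0 subr0.
  by rewrite mulr_sumr -sumrB; apply: eq_bigr => y _; ring.
set s := t * emission z.
have s_gt0 : 0 < s by apply: mulr_gt0.
apply: (le_trans (ler_norm_sum _ _ _)).
apply: (@le_trans _ _
   (\sum_(y < K) pi y * (s * h y ^+ 2 + (r y z - emission z) ^+ 2 / s) / 2)).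
  apply: ler_sum => y _.
  rewrite normrM normrM (ger0_norm (ltW (pi_gt0 y))) -mulrA ler_pdivlMr // mulrAC.
  by rewrite -mulrA; apply: ler_wpM2l; [exact: ltW | exact: two_norm_mul_le].
rewrite -mulr_suml; apply: ler_wpM2r; first by rewrite invr_ge0.
rewrite (eq_bigr (fun y => s * (pi y * h y ^+ 2) + pi y * (r y z - emission z) ^+ 2 / s));
  last by move=> y _; ring.
rewrite big_split /= -mulr_sumr -mulr_suml emission_variance.
have -> : (emission_sq z - emission z ^+ 2) / s =
          (emission_sq z / emission z - emission z) / t.
  by rewrite /s; field; rewrite !gt_eqF.
by rewrite /s mulrAC.
Qed.

Lemma esum_emission_cov_le :
  (\esum_(z in [set: Zt]) (`|\sum_(y < K) pi y * h y * r y z|)%:E <=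
   (Num.sqrt (\sum_(y < K) pi y * h y ^+ 2) * Num.sqrt (fine (Rratio pi r) - 1))%:E)%E.
Proof.
set H := \sum_(y < K) pi y * h y ^+ 2.
have H_ge0 : 0 <= H by apply: sumr_ge0 => y _; apply: mulr_ge0; [apply: ltW|apply: sqr_ge0].
apply: ge_ereal_sup => _ [S [finS _] <-] /=.
rewrite fsbig_finite //= sumEFin lee_fin.
apply: le_sqrt_mul_of_amgm => [//||t t_gt0]; first by rewrite subr_ge0 fine_Rratio_ge1.
set zs := finmap.enum_fset _.
apply: (@le_trans _ _ (\sum_(z <- zs) (t * H * emission z + emission_chi2 z / t) / 2)).
  by apply: ler_sum => z _; apply: emission_cov_le.
rewrite -mulr_suml ler_wpM2r ?invr_ge0 // big_split /= -mulr_sumr -mulr_suml.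
have emission_le1 : \sum_(z <- zs) emission z <= 1.
  rewrite -lee_fin -sumEFin -esum_emission -fsbig_finite //.
  by apply: ereal_sup_ubound; exists S.
have chi2_le : \sum_(z <- zs) emission_chi2 z <= fine (Rratio pi r) - 1.
  rewrite -lee_fin -sumEFin -esum_emission_chi2 -fsbig_finite //.
  by apply: ereal_sup_ubound; exists S.
have tH_ge0 : 0 <= t * H by apply: mulr_ge0 => //; apply: ltW.
apply: lerD; first by rewrite -{2}(mulr1 (t * H)) ler_wpM2l.
by rewrite ler_wpM2r // invr_ge0 ltW.
Qed.

End MeanZero.

End Emission.

Lemma lambda_star_ge (R : realType) (K : nat) (lam : 'I_K -> R) (j : 'I_K) :
  (0 < j)%N -> `|lam j| <= lambda_star lam.
Proof. by move=> j_gt0; apply: le_bigmax_cond. Qed.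

Lemma lambda_star_ge0 (R : realType) (K : nat) (lam : 'I_K -> R) : 0 <= lambda_star lam.
Proof. exact: bigmax_ge_id. Qed.

Section SpectralTail.
Variables (R : realType) (K : nat) (pi lam : 'I_K -> R) (f : 'I_K -> 'I_K -> R).
Variable j0 : 'I_K.
Hypothesis j0_first : j0 = 0%N :> nat.
Hypothesis orthonormal : forall i j, \sum_(x < K) pi x * f i x * f j x = (i == j)%:R.
Hypothesis f_first : forall x, f j0 x = 1.
Hypothesis lam_first : lam j0 = 1.

Definition spectral_tail L x y := \sum_(j < K | (0 < j)%N) lam j ^+ L * f j x * f j y.

Lemma big_first_tail (F : 'I_K -> R) :
  \sum_(j < K) F j = F j0 + \sum_(j < K | (0 < j)%N) F j.
Proof.
rewrite (bigD1 j0) //=; congr (_ + _); apply: eq_bigl => j.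
by rewrite -val_eqE /= j0_first lt0n.
Qed.

Lemma spectral_first_tail L x y :
  \sum_(j < K) lam j ^+ L * f j x * f j y = 1 + spectral_tail L x y.
Proof. by rewrite big_first_tail lam_first !f_first expr1n !mulr1. Qed.

Lemma spectral_tail_mean0 L x : \sum_(y < K) pi y * spectral_tail L x y = 0.
Proof.
transitivity (\sum_(j < K | (0 < j)%N)
                lam j ^+ L * f j x * \sum_(y < K) pi y * f j0 y * f j y).
  rewrite /spectral_tail; under eq_bigr do rewrite mulr_sumr.
  rewrite exchange_big /=; apply: eq_bigr => j _; rewrite mulr_sumr.
  by apply: eq_bigr => y _; rewrite f_first; ring.
apply: big1 => j j_gt0; rewrite orthonormal.
have -> : (j0 == j) = false by apply/negbTE; rewrite -val_eqE /= j0_first eq_sym -lt0n.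
by rewrite mulr0.
Qed.

Lemma spectral_tail_norm2 L x :
  \sum_(y < K) pi y * spectral_tail L x y ^+ 2 =
  \sum_(j < K | (0 < j)%N) lam j ^+ (2 * L) * f j x ^+ 2.
Proof.
rewrite (orthonormal_norm2 orthonormal (fun j => (0 < j)%N) (fun j => lam j ^+ L * f j x)).
by apply: eq_bigr => j _; rewrite exprMn -exprM mulnC.
Qed.

Lemma sqrt_spectral_tail_norm2_le L x : 0 < pi x ->
  Num.sqrt (\sum_(j < K | (0 < j)%N) lam j ^+ (2 * L) * f j x ^+ 2) <=
  lambda_star lam ^+ L * Num.sqrt ((pi x)^-1 - 1).
Proof.
move=> pix_gt0.
have -> : (pi x)^-1 - 1 = \sum_(j < K | (0 < j)%N) f j x ^+ 2.
  rewrite -(orthonormal_sum_sq orthonormal pix_gt0) big_first_tail f_first expr1n.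
  by rewrite addrAC subrr add0r.
have lam_pow_ge0 : 0 <= lambda_star lam ^+ L by rewrite exprn_ge0 // lambda_star_ge0.
rewrite -[X in _ <= X * _]ger0_norm // -sqrtr_sqr -sqrtrM ?sqr_ge0 // ler_sqrt; last first.
  by apply: mulr_ge0; rewrite ?sqr_ge0 //; apply: sumr_ge0 => j _; rewrite sqr_ge0.
rewrite mulr_sumr; apply: ler_sum => j j_gt0; apply: ler_wpM2r; first exact: sqr_ge0.
rewrite -exprM [(L * 2)%N]mulnC !exprM; apply: lerXn2r; rewrite ?nnegrE ?sqr_ge0 //.
rewrite -(real_normK (num_real (lam j))) lerXn2r ?nnegrE ?normr_ge0 ?lambda_star_ge0 //.
exact: lambda_star_ge.
Qed.

End SpectralTail.

Section Predictability.
Variables (d : measure_display) (T : measurableType d) (R : realType).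
Variables (K : nat) (Zt : countType) (Pr : probability T R).
Variables (P : 'M[R]_K) (pi : 'I_K -> R) (r : 'I_K -> Zt -> R).
Variables (X : nat -> T -> 'I_K) (Z : nat -> T -> Zt).
Variables (lam : 'I_K -> R) (f : 'I_K -> 'I_K -> R) (j0 : 'I_K).
Hypothesis j0_first : j0 = 0%N :> nat.
Hypothesis stationary : stationary_distribution P pi.
Hypothesis modulated : markov_modulated Pr P pi r X Z.
Hypothesis reversible : forall x y, pi x * P x y = pi y * P y x.
Hypothesis eigen : forall j x, \sum_(y < K) P x y * f j y = lam j * f j x.
Hypothesis orthonormal : forall i j, \sum_(x < K) pi x * f i x * f j x = (i == j)%:R.
Hypothesis f_first : forall x, f j0 x = 1.
Hypothesis lam_first : lam j0 = 1.

Let pi_stationary : forall y, \sum_(x < K) pi x * P x y = pi y.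
Proof. by case: stationary => _ []. Qed.

Let pi_gt0 : forall x, 0 < pi x.
Proof. by case: stationary => pi_ge0 _; exact: orthonormal_weight_gt0 orthonormal pi_ge0. Qed.

Lemma predictability_spectral x n L :
  predictability Pr X Z x n L =
  ((2^-1)%:E * \esum_(z in [set: Zt])
                 (`|\sum_(y < K) pi y * spectral_tail lam f L x y * r y z|)%:E)%E.
Proof.
rewrite /predictability /TV; congr (_ * _)%E; apply: eq_esum => z _; congr (`|_|%:E).
have completeness := orthonormal_completeness orthonormal.
rewrite (prob_ZX modulated pi_stationary completeness reversible eigen).
rewrite (prob_X modulated pi_stationary) (prob_Z modulated pi_stationary) /=.
transitivity (\sum_(y < K) pi y * (\sum_(j < K) lam j ^+ L * f j x * f j y) * r y z
              - \sum_(y < K) pi y * r y z).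
  congr (_ - _); rewrite mulr_suml; apply: eq_bigr => y _.
  by field; rewrite gt_eqF.
by rewrite -sumrB; apply: eq_bigr => y _; rewrite (spectral_first_tail j0_first) //; ring.
Qed.

Lemma predictability_le x n L :
  (predictability Pr X Z x n L <=
   (2^-1 * (Num.sqrt (\sum_(j < K | (0 < j)%N) lam j ^+ (2 * L) * f j x ^+ 2)
              * Num.sqrt (fine (Rratio pi r) - 1)))%:E)%E.
Proof.
have [_ [_ [r_ge0 [r_sum _]]]] := modulated.
have [_ [pi_sum _]] := stationary.
rewrite predictability_spectral EFinM -(spectral_tail_norm2 lam orthonormal).
apply: lee_wpmul2l; first by rewrite lee_fin invr_ge0.
exact: (esum_emission_cov_le pi_gt0 pi_sum r_ge0 r_sum
  (spectral_tail_mean0 lam j0_first orthonormal f_first L x)).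
Qed.

End Predictability.

Unset Implicit Arguments.
Theorem theorem2 (d : measure_display) (T : measurableType d) (R : realType)
    (K : nat) (Zt : countType) (Pr : probability T R)
    (P : 'M[R]_K) (pi : 'I_K -> R) (r : 'I_K -> Zt -> R)
    (X : nat -> T -> 'I_K) (Z : nat -> T -> Zt)
    (lam : 'I_K -> R) (f : 'I_K -> 'I_K -> R) :
  stochastic P -> irreducible P -> aperiodic P ->
  stationary_distribution P pi ->
  markov_modulated Pr P pi r X Z ->
  reversible P pi ->
  (forall j x, \sum_(y < K) P x y * f j y = lam j * f j x) ->
  (forall i j, \sum_(x < K) pi x * f i x * f j x = (i == j)%:R) ->
  (forall (j0 : 'I_K) x, nat_of_ord j0 = 0%N -> f j0 x = 1) ->
  (forall (j0 : 'I_K), nat_of_ord j0 = 0%N -> lam j0 = 1) ->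
  (forall i j : 'I_K, (i <= j)%N -> lam j <= lam i) ->
  (forall j, -1 < lam j) ->
  ((1%:E <= Rratio pi r)%E /\ (Rratio pi r <= K%:R%:E)%E) /\
  (forall (x : 'I_K) (n L : nat),
     (predictability Pr X Z x n L <=
       (2^-1 * Num.sqrt (\sum_(j < K | (0 < j)%N) lam j ^+ (2 * L) * f j x ^+ 2)
        * Num.sqrt 2 * Num.sqrt (fine (Rratio pi r) - 1))%:E)%E /\
     (predictability Pr X Z x n L <=
       (2^-1 * lambda_star lam ^+ L * Num.sqrt ((pi x)^-1 - 1)
        * Num.sqrt 2 * Num.sqrt (fine (Rratio pi r) - 1))%:E)%E).
Proof.
move=> _ _ _ stationary modulated reversible eigen orthonormal f_first lam_first _ _.
have [pi_ge0 [pi_sum _]] := stationary.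
have [_ [_ [r_ge0 [r_sum _]]]] := modulated.
have pi_gt0 := orthonormal_weight_gt0 orthonormal pi_ge0.
split; first by split; [exact: Rratio_ge1 | exact: Rratio_leK].
move=> x n L.
pose j0 : 'I_K := Ordinal (leq_ltn_trans (leq0n x) (ltn_ord x)).
have j0_first : j0 = 0%N :> nat by [].
have bound := predictability_le j0_first stationary modulated reversible eigen orthonormal
  (fun y => f_first j0 y j0_first) (lam_first j0 j0_first) x n L.
have tail_le := sqrt_spectral_tail_norm2_le lam j0_first orthonormal
  (fun y => f_first j0 y j0_first) L (pi_gt0 x).
set sqrtH := Num.sqrt _ in bound tail_le *; set sqrtE := Num.sqrt (_ - 1) in bound *.
have sqrtE_ge0 : 0 <= sqrtE := sqrtr_ge0 _.
have sqrt2_ge1 : 1 <= Num.sqrt (2 : R) by rewrite -{1}sqrtr1 ler_sqrt; lra.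
split; apply: (le_trans bound); rewrite lee_fin -!mulrA ler_wpM2l ?invr_ge0 //.
  by rewrite mulrCA ler_peMl // mulr_ge0 // sqrtr_ge0.
apply: (le_trans (ler_wpM2r sqrtE_ge0 tail_le)).
rewrite -mulrA ler_wpM2l ?exprn_ge0 ?lambda_star_ge0 // ler_wpM2l ?sqrtr_ge0 //.
by rewrite ler_peMl.
Qed.
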